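(* Let $\mathcal C$ be a clustering problem, and let $P\in\mathcal P(\mathcal X)^K$ with $\tfrac12\ge p_{\min}=\min_{i\in[K]}\min_{a\in\mathcal X}P_i(a)>0$. Let $\epsilon\in(0,p_{\min}/2)$. Then for all $Q\in\mathcal P(\mathcal X)^K$ with $\|P-Q\|_\infty\le\epsilon$, all $w\in\mathrm{int}(\Sigma_K)$ and all $\sigma\in\mathcal C$, $$|g_P^\sigma(w)-g_Q^\sigma(w)|\le E\epsilon,\qquad |G_P^\sigma(w)-G_Q^\sigma(w)|\le E\epsilon,\qquad E=|\mathcal X|\log\frac{2-p_{\min}}{p_{\min}}.$$
   Context: Framework. Let $\mathcal X$ be a finite alphabet with $|\mathcal X|\ge2$, $\mathcal P(\mathcal X)$ the set of probability distributions on $\mathcal X$, and $K\ge2$ an integer (number of arms); $[n]=\{1,\dots,n\}$. A hypothesis is a collection $\sigma=\{\mathcal A_1^\sigma,\dots,\mathcal A_{M_\sigma}^\sigma\}$ ($M_\sigma\ge1$) of pairwise disjoint subsets of $[K]$, each of cardinality at least 2 (clusters). A clustering problem is a finite set $\mathcal C$ of hypotheses with $|\mathcal C|\ge2$. For $P,Q\in\mathcal P(\mathcal X)^K$, $\|P-Q\|_\infty=\max_{i\in[K]}\max_{a\in\mathcal X}|P_i(a)-Q_i(a)|$. Functions. $D(P\|Q)$ is the KL divergence. $\Sigma_K=\{w\in\mathbb R^K: w_i\ge0,\sum_iw_i=1\}$, $\mathrm{int}(\Sigma_K)$ its relative interior (all $w_i>0$). For $\mathcal A\subseteq[K]$, $G(P_{\mathcal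 A},w_{\mathcal A})=0$ if $w_i=0$ for all $i\in\mathcal A$, and otherwise $G(P_{\mathcal A},w_{\mathcal A})=\sum_{i\in\mathcal A}w_iD(P_i\|W)$ with $W=\sum_{i\in\mathcal A}w_iP_i/\sum_{i\in\mathcal A}w_i$. For $\sigma\in\mathcal C$, $g_P^\sigma(w)=\sum_{m=1}^{M_\sigma}G(P_{\mathcal A_m^\sigma},w_{\mathcal A_m^\sigma})$ and $G_P^\sigma(w)=\min_{\sigma'\in\mathcal C\setminus\{\sigma\}}g_P^{\sigma'}(w)$. *)

From HB Require Import structures.
From mathcomp Require Import all_boot all_order all_algebra.
From mathcomp Require Import all_classical all_reals exp.
Set Implicit Arguments. Unset Strict Implicit. Unset Printing Implicit Defensive.
Import Order.TTheory GRing.Theory Num.Theory.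
Local Open Scope ring_scope.

Section Defs.
Variables (R : realType) (X : finType) (K : nat).

Definition is_dist (p : X -> R) : Prop :=
  (forall a, 0 <= p a) /\ \sum_(a : X) p a = 1.
Definition is_dist_vec (P : 'I_K -> X -> R) : Prop := forall i, is_dist (P i).

(* KL divergence, with the convention 0 log(0/q) = 0 *)
Definition KL (p q : X -> R) : R :=
  \sum_(a : X) (if p a == 0 then 0 else p a * ln (p a / q a)).

Definition Gclu (P : 'I_K -> X -> R) (A : {set 'I_K}) (w : 'I_K -> R) : R :=
  if [forall i in A, w i == 0] then 0
  else let W := fun a => (\sum_(i in A) w i * P i a) / (\sum_(i in A) w i) in
       \sum_(i in A) w i * KL (P i) W.

Definition is_hypothesis (s : {set {set 'I_K}}) : Prop :=
  s != finset.set0 /\ (forall A, A \in s -> (2 <= #|A|)%N) /\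
  (forall A B, A \in s -> B \in s -> A != B -> [disjoint A & B]).

Definition is_clustering_problem (C : {set {set {set 'I_K}}}) : Prop :=
  (2 <= #|C|)%N /\ forall s, s \in C -> is_hypothesis s.

Definition gsig (P : 'I_K -> X -> R) (s : {set {set 'I_K}}) (w : 'I_K -> R) : R :=
  \sum_(A in s) Gclu P A w.

Definition Gsig (C : {set {set {set 'I_K}}}) (P : 'I_K -> X -> R)
    (s : {set {set 'I_K}}) (w : 'I_K -> R) : R :=
  match [pick s' in C :\ s] with
  | Some s0 => \big[Num.min/ gsig P s0 w]_(s' in C :\ s) gsig P s' w
  | None => 0
  end.

Definition in_int_simplex (w : 'I_K -> R) : Prop :=
  (forall i, 0 < w i) /\ \sum_(i < K) w i = 1.

(* p_min = min_i min_a P_i(a); the seed 1 is harmless since entries are <= 1 *)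
Definition pmin (P : 'I_K -> X -> R) : R :=
  \big[Num.min/ 1]_(i < K) \big[Num.min/ 1]_(a : X) P i a.

Definition supdist (P Q : 'I_K -> X -> R) : R :=
  \big[Num.max/ 0]_(i < K) \big[Num.max/ 0]_(a : X) `|P i a - Q i a|.

End Defs.

From mathcomp Require Import all_boot all_order all_algebra.
From mathcomp Require Import all_classical all_reals exp.
From mathcomp Require Import ring lra.
Set Implicit Arguments. Unset Strict Implicit. Unset Printing Implicit Defensive.
Import Order.TTheory GRing.Theory Num.Theory.
Local Open Scope ring_scope.

(* All entries of P and Q lie in [a, b] = [p/2, 1 - p/2], p = pmin P.  For a
   cluster A of positive weight, G(P_A, w_A) = sum_i w_i D(P_i || W_P) where the
   mixture W_P minimises V |-> sum_i w_i D(P_i || V) (Gibbs' inequality), so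
   G(P_A, w_A) - G(Q_A, w_A) <= sum_i w_i (D(P_i || W_Q) - D(Q_i || W_Q)).
   With the reference distribution c fixed, t |-> t ln(t/c) - t has derivative
   ln(t/c) in [ln a - ln b, ln b - ln a]; as sum_x (P_i(x) - Q_i(x)) = 0, the
   subtracted linear term is free, and each letter contributes at most
   eps (ln b - ln a).  This gives |X| ln((2 - p)/p) eps per unit of weight;
   the clusters of a hypothesis are disjoint and carry total weight <= 1, and
   a minimum of functions that are each within E eps is within E eps. *)

Section Entropy.
Variable R : realType.

Lemma bounded_gt0 (T : Type) (f : T -> R) (a b : R) :
  0 < a -> (forall t, a <= f t <= b) -> forall t, 0 < f t.
Proof. by move=> a0 hf t; case/andP: (hf t) => /(lt_le_trans a0). Qed.

Lemma lnB_ge0 (a b : R) : 0 < a -> a <= b -> 0 <= ln b - ln a.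
Proof. by move=> a0 ab; rewrite subr_ge0 ler_ln ?posrE ?(lt_le_trans a0 ab). Qed.

Lemma mulr_lnB_le (x y : R) : 0 < x -> 0 < y -> x * (ln y - ln x) <= y - x.
Proof.
move=> x0 y0; rewrite -ln_div ?posrE //.
have : ln (y / x) <= y / x - 1.
  rewrite -ler_expR lnK ?posrE ?divr_gt0 //.
  by have := expR_ge1Dx (y / x - 1); rewrite addrC subrK.
move/(ler_wpM2l (ltW x0)).
by rewrite mulrBr mulr1 mulrCA divff ?gt_eqF ?mulr1.
Qed.

Lemma xlnx_lipschitz_le (a b c x y : R) :
  0 < a -> a <= x <= b -> a <= y <= b -> a <= c <= b -> y <= x ->
  `|x * (ln x - ln c) - y * (ln y - ln c) - (x - y)| <= (x - y) * (ln b - ln a).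
Proof.
move=> a0 /andP[ax xb] /andP[ay yb] /andP[ac cb] yx.
have [x0 y0 c0] : [/\ 0 < x, 0 < y & 0 < c].
  by split; apply: lt_le_trans a0 _.
have b0 : 0 < b by apply: lt_le_trans xb.
have h1 := mulr_lnB_le x0 y0; have h2 := mulr_lnB_le y0 x0.
have la_y : ln a <= ln y by rewrite ler_ln ?posrE.
have la_x : ln a <= ln x by rewrite ler_ln ?posrE.
have la_c : ln a <= ln c by rewrite ler_ln ?posrE.
have lc_b : ln c <= ln b by rewrite ler_ln ?posrE.
have lx_b : ln x <= ln b by rewrite ler_ln ?posrE.
(* h1 and h2 squeeze the left-hand side between (x - y) (ln y - ln c) and
   (x - y) (ln x - ln c). *)
have p1 : 0 <= (x - y) * (ln y - ln c - ln a + ln b) by apply: mulr_ge0; lra.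
have p2 : 0 <= (x - y) * (ln b - ln a - ln x + ln c) by apply: mulr_ge0; lra.
rewrite ler_norml; apply/andP; split; nra.
Qed.

Lemma xlnx_lipschitz (a b c x y : R) :
  0 < a -> a <= x <= b -> a <= y <= b -> a <= c <= b ->
  `|x * (ln x - ln c) - y * (ln y - ln c) - (x - y)| <= `|x - y| * (ln b - ln a).
Proof.
move=> a0 hx hy hc; have [yx|/ltW xy] := leP y x.
  by rewrite [`|x - y|]ger0_norm ?subr_ge0 //; apply: xlnx_lipschitz_le.
rewrite [`|x - y|]distrC [`|y - x|]ger0_norm ?subr_ge0 // -normrN.
have -> : - (x * (ln x - ln c) - y * (ln y - ln c) - (x - y)) =
          y * (ln y - ln c) - x * (ln x - ln c) - (y - x) by ring.
exact: xlnx_lipschitz_le.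
Qed.

Variable X : finType.

Lemma KL_lnE (p v : X -> R) : (forall z, 0 < p z) -> (forall z, 0 < v z) ->
  KL p v = \sum_z p z * (ln (p z) - ln (v z)).
Proof. by move=> hp hv; apply: eq_bigr => z _; rewrite gt_eqF // ln_div ?posrE. Qed.

Lemma KL_lipschitz_fst (p q v : X -> R) (a b eps : R) : 0 < a ->
  (forall z, a <= p z <= b) -> (forall z, a <= q z <= b) ->
  (forall z, a <= v z <= b) -> \sum_z p z = \sum_z q z ->
  (forall z, `|p z - q z| <= eps) ->
  `|KL p v - KL q v| <= #|X|%:R * (ln b - ln a) * eps.
Proof.
move=> a0 hp hq hv hs hpq.
rewrite !KL_lnE //; try exact: bounded_gt0 a0 _.
have -> : \sum_z p z * (ln (p z) - ln (v z)) - \sum_z q z * (ln (q z) - ln (v z)) =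
  \sum_z (p z * (ln (p z) - ln (v z)) - q z * (ln (q z) - ln (v z)) - (p z - q z)).
  by rewrite !sumrB hs subrr subr0.
apply: le_trans (ler_norm_sum _ _ _) _.
apply: le_trans (_ : \sum_(z : X) eps * (ln b - ln a) <= _); last first.
  by rewrite sumr_const -[_ *+ _]mulr_natl mulrA mulrAC.
apply: ler_sum => z _; apply: le_trans (xlnx_lipschitz a0 (hp z) (hq z) (hv z)) _.
by case/andP: (hp z) => az zb; rewrite ler_wpM2r // lnB_ge0 ?(le_trans az zb).
Qed.

End Entropy.

Lemma bigmin_lipschitz (R : realDomainType) (T : finType) (D : {pred T})
    (f g : T -> R) (x0 y0 d : R) :
  `|x0 - y0| <= d -> (forall t, t \in D -> `|f t - g t| <= d) ->
  `|\big[Num.min/x0]_(t in D) f t - \big[Num.min/y0]_(t in D) g t| <= d.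
Proof.
move=> h0 h; apply: (big_ind2 (fun x y => `|x - y| <= d)) => // x1 x2 y1 y2.
rewrite !ler_norml => /andP[hx1 hx2] /andP[hy1 hy2].
by case: (leP x1 y1) => h1; case: (leP x2 y2) => h2;
  rewrite ?(minElt h1) ?(minEle h1); apply/andP; split; lra.
Qed.

Section Clusters.
Variables (R : realType) (X : finType) (K : nat).
Implicit Types (P Q : 'I_K -> X -> R) (A : {set 'I_K}) (w : 'I_K -> R).

(* Literally the [W] of [Gclu], so that it can be folded there. *)
Definition mixture P A w : X -> R :=
  fun a => (\sum_(i in A) w i * P i a) / (\sum_(i in A) w i).

Lemma mixture_sum1 P A w : is_dist_vec P -> 0 < \sum_(i in A) w i ->
  \sum_z mixture P A w z = 1.
Proof.
move=> hP w0; rewrite /mixture -mulr_suml exchange_big /=.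
rewrite (eq_bigr w) ?divff ?gt_eqF // => i _.
by rewrite -mulr_sumr (proj2 (hP i)) mulr1.
Qed.

Lemma mixture_bounded P A w (a b : R) : (forall i z, a <= P i z <= b) ->
  (forall i, 0 <= w i) -> 0 < \sum_(i in A) w i ->
  forall z, a <= mixture P A w z <= b.
Proof.
move=> hP hw w0 z; rewrite /mixture ler_pdivlMr // ler_pdivrMr // !mulr_sumr.
apply/andP; split; apply: ler_sum => i _; case/andP: (hP i z) => az zb.
  by rewrite mulrC ler_wpM2l.
by rewrite [X in _ <= X]mulrC ler_wpM2l.
Qed.

Lemma mixture_gt0 P A w : (forall i z, 0 < P i z) -> (forall i, 0 <= w i) ->
  0 < \sum_(i in A) w i -> forall z, 0 < mixture P A w z.
Proof.
move=> hP hw w0 z; have wP_ge0 i : 0 <= w i * P i z := mulr_ge0 (hw i) (ltW (hP i z)).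
rewrite divr_gt0 // lt_def sumr_ge0 ?andbT //.
apply: contraTneq w0 => /(psumr_eq0P (fun i _ => wP_ge0 i)) wP0.
rewrite big1 ?ltxx // => i iA; have /eqP := wP0 i iA.
by rewrite mulf_eq0 (gt_eqF (hP i z)) orbF => /eqP.
Qed.

Lemma mixture_minimizes_KL P A w (V : X -> R) :
  is_dist_vec P -> (forall i z, 0 < P i z) -> (forall i, 0 <= w i) ->
  0 < \sum_(i in A) w i -> (forall z, 0 < V z) -> \sum_z V z = 1 ->
  \sum_(i in A) w i * KL (P i) (mixture P A w) <= \sum_(i in A) w i * KL (P i) V.
Proof.
move=> hdP hP hw w0 hV V1; have W0 := mixture_gt0 hP hw w0.
set W := mixture P A w in W0 *.
have numE z : \sum_(i in A) w i * P i z = (\sum_(i in A) w i) * W z.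
  by rewrite /W /mixture mulrC divfK ?gt_eqF.
rewrite -subr_ge0 -sumrB.
have -> : \sum_(i in A) (w i * KL (P i) V - w i * KL (P i) W) =
    (\sum_(i in A) w i) * \sum_z W z * (ln (W z) - ln (V z)).
  rewrite (eq_bigr (fun i => \sum_z w i * P i z * (ln (W z) - ln (V z)))).
    rewrite exchange_big mulr_sumr; apply: eq_bigr => z _.
    by rewrite -mulr_suml numE mulrA.
  move=> i _; rewrite !KL_lnE // -mulrBr -sumrB mulr_sumr.
  by apply: eq_bigr => z _; ring.
apply: mulr_ge0; first exact: ltW.
have WV0 : \sum_z (W z - V z) = 0 by rewrite sumrB mixture_sum1 // V1 subrr.
rewrite -[X in X <= _]WV0; apply: ler_sum => z _.
by have := mulr_lnB_le (W0 z) (hV z); lra.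
Qed.

Lemma mixture_KL_sub_le P Q A w (a b eps : R) : 0 < a -> (forall i, 0 <= w i) ->
  is_dist_vec P -> is_dist_vec Q ->
  (forall i z, a <= P i z <= b) -> (forall i z, a <= Q i z <= b) ->
  (forall i z, `|P i z - Q i z| <= eps) -> 0 < \sum_(i in A) w i ->
  \sum_(i in A) w i * KL (P i) (mixture P A w)
    - \sum_(i in A) w i * KL (Q i) (mixture Q A w)
  <= (\sum_(i in A) w i) * (#|X|%:R * (ln b - ln a) * eps).
Proof.
move=> a0 hw hdP hdQ hP hQ hPQ w0; have WQ := mixture_bounded hQ hw w0.
apply: le_trans (_ : _ <= \sum_(i in A) w i * KL (P i) (mixture Q A w)
                        - \sum_(i in A) w i * KL (Q i) (mixture Q A w)) _.
  rewrite lerD2r; apply: mixture_minimizes_KL => //.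
  - by move=> i; apply: bounded_gt0 a0 (hP i).
  - exact: bounded_gt0 a0 WQ.
  - exact: mixture_sum1.
rewrite -sumrB mulr_suml; apply: ler_sum => i _; rewrite -mulrBr ler_wpM2l //.
apply: le_trans (ler_norm _) (KL_lipschitz_fst a0 (hP i) (hQ i) WQ _ (hPQ i)).
by rewrite (proj2 (hdP i)) (proj2 (hdQ i)).
Qed.

Lemma Gclu_lipschitz P Q A w (a b eps : R) : 0 < a -> a <= b -> 0 <= eps ->
  (forall i, 0 <= w i) -> is_dist_vec P -> is_dist_vec Q ->
  (forall i z, a <= P i z <= b) -> (forall i z, a <= Q i z <= b) ->
  (forall i z, `|P i z - Q i z| <= eps) ->
  `|Gclu P A w - Gclu Q A w| <= (\sum_(i in A) w i) * (#|X|%:R * (ln b - ln a) * eps).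
Proof.
move=> a0 ab e0 hw hdP hdQ hP hQ hPQ; rewrite /Gclu.
case: ifP => [_ | /negbT/forallPn[j]].
  by rewrite subrr normr0 !mulr_ge0 ?sumr_ge0 ?lnB_ge0.
rewrite negb_imply => /andP[jA wj_neq0].
have w0 : 0 < \sum_(i in A) w i.
  have wj : 0 < w j by rewrite lt_def wj_neq0 hw.
  by apply: lt_le_trans wj _; rewrite (bigD1 j) //= lerDl sumr_ge0.
rewrite -/(mixture P A w) -/(mixture Q A w) ler_norml mixture_KL_sub_le // andbT.
rewrite lerNl opprB mixture_KL_sub_le // => i z.
by rewrite distrC.
Qed.

Lemma hypothesis_trivIset (s : {set {set 'I_K}}) :
  is_hypothesis s -> finset.trivIset s.
Proof. by case=> _ [_ hdisj]; apply/finset.trivIsetP. Qed.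

Lemma gsig_lipschitz P Q (s : {set {set 'I_K}}) w (a b eps : R) :
  0 < a -> a <= b -> 0 <= eps -> finset.trivIset s ->
  (forall i, 0 <= w i) -> \sum_(i < K) w i <= 1 -> is_dist_vec P -> is_dist_vec Q ->
  (forall i z, a <= P i z <= b) -> (forall i z, a <= Q i z <= b) ->
  (forall i z, `|P i z - Q i z| <= eps) ->
  `|gsig P s w - gsig Q s w| <= #|X|%:R * (ln b - ln a) * eps.
Proof.
move=> a0 ab e0 tr hw w1 hdP hdQ hP hQ hPQ; set c := _ * _ * eps.
have c0 : 0 <= c by rewrite !mulr_ge0 ?lnB_ge0.
rewrite /gsig -sumrB; apply: le_trans (ler_norm_sum _ _ _) _.
apply: le_trans (_ : _ <= \sum_(A in s) (\sum_(i in A) w i) * c) _.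
  by apply: ler_sum => A _; apply: Gclu_lipschitz.
rewrite -mulr_suml -(finset.big_trivIset _ tr) ler_piMl //.
apply: le_trans w1; rewrite [X in _ <= X](bigID (mem (finset.cover s))) /=.
by rewrite lerDl sumr_ge0.
Qed.

Lemma Gsig_lipschitz (C : {set {set {set 'I_K}}}) P Q s w (d : R) : 0 <= d ->
  (forall t, t \in C -> `|gsig P t w - gsig Q t w| <= d) ->
  `|Gsig C P s w - Gsig C Q s w| <= d.
Proof.
move=> d0 hC; rewrite /Gsig; case: pickP => [t0 | _]; last by rewrite subrr normr0.
rewrite in_setD1 => /andP[_ /hC t0C]; apply: bigmin_lipschitz t0C _ => t.
by rewrite in_setD1 => /andP[_ /hC].
Qed.

Lemma pmin_le P i z : pmin P <= P i z.
Proof. by apply: le_trans (bigmin_le _ i _) _; apply: bigmin_le. Qed.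

Lemma le_supdist P Q i z : `|P i z - Q i z| <= supdist P Q.
Proof.
apply: le_trans (le_bigmax _ _ i).
exact: (le_bigmax _ (fun a => `|P i a - Q i a|) z).
Qed.

Lemma dist_addr_le1 (p : X -> R) z z' : is_dist p -> z != z' -> p z + p z' <= 1.
Proof.
case=> p_ge0 <- zz'; rewrite (bigD1 z) //= lerD2l (bigD1 z') 1?eq_sym //= lerDl.
exact: sumr_ge0.
Qed.

Lemma le_1_sub_pmin P i z : (1 < #|X|)%N -> is_dist_vec P -> P i z <= 1 - pmin P.
Proof.
move=> /card_gt1P[x [y [_ _ xy]]] hP.
have [z' zz'] : exists z', z != z'.
  by case: (eqVneq z x) => [-> | zx]; [exists y | exists x].
by have := dist_addr_le1 (hP i) zz'; have := pmin_le P i z'; lra.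
Qed.

End Clusters.

Theorem lemma6 (R : realType) (X : finType) (K : nat)
    (C : {set {set {set 'I_K}}}) (P : 'I_K -> X -> R) (eps : R) :
  (2 <= #|X|)%N -> (2 <= K)%N ->
  is_clustering_problem C ->
  is_dist_vec P ->
  0 < pmin P -> pmin P <= 1 / 2 ->
  0 < eps -> eps < pmin P / 2 ->
  forall (Q : 'I_K -> X -> R) (w : 'I_K -> R) (s : {set {set 'I_K}}),
    is_dist_vec Q -> supdist P Q <= eps ->
    in_int_simplex w -> s \in C ->
    let E := #|X|%:R * ln ((2 - pmin P) / pmin P) in
    `|gsig P s w - gsig Q s w| <= E * eps /\
    `|Gsig C P s w - Gsig C Q s w| <= E * eps.
Proof.
move=> hX _ [_ hyp] hdP p0 p_half e0 e_half Q w s hdQ hPQ [w_gt0 w1] sC E.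
set p := pmin P in p0 p_half e_half E *.
have hPp i z : p <= P i z <= 1 - p.
  by rewrite pmin_le le_1_sub_pmin.
have hP i z : p / 2 <= P i z <= 1 - p / 2.
  by have /andP[? ?] := hPp i z; apply/andP; split; lra.
have hPQz i z : `|P i z - Q i z| <= eps := le_trans (le_supdist P Q i z) hPQ.
have hQ i z : p / 2 <= Q i z <= 1 - p / 2.
  have /andP[? ?] := hPp i z; have := hPQz i z.
  by rewrite ler_norml => /andP[? ?]; apply/andP; split; lra.
have E_eps : E * eps = #|X|%:R * (ln (1 - p / 2) - ln (p / 2)) * eps.
  rewrite /E -ln_div ?posrE; try lra.
  by congr (_ * ln _ * _); field; rewrite gt_eqF.
have hg t : t \in C -> `|gsig P t w - gsig Q t w| <= E * eps.
  move=> tC; rewrite E_eps; apply: gsig_lipschitz hdP hdQ hP hQ hPQz; try lra.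
  - exact: hypothesis_trivIset (hyp t tC).
  - by move=> i; apply: ltW.
split; first exact: hg.
exact: Gsig_lipschitz (le_trans (normr_ge0 _) (hg s sC)) hg.
Qed.
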